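(* For all integers $n\ge 2$ and $k\ge 1$, the number of edges of $H_{n,k}$ is $$|E_{n,k}|=\frac{3}{2}n^{k+1}-(n-1)^{k+1}-2n^k-\frac{n}{2}+1 .$$
   Context: Let $n\ge 2$ and $k\ge 1$ be integers. $H_{n,k}$ is the simple undirected graph with vertex set $V_{n,k}=\mathbb{Z}_n^k$ (so $|V_{n,k}|=n^k$), whose vertices are written as strings $x_1x_2\ldots x_k$ with $x_j\in\mathbb{Z}_n=\{0,1,\ldots,n-1\}$. Two distinct vertices are adjacent if and only if they are related by one of the following rules. For $i=0$ the prefix $x_1\ldots x_i$ is empty, and ''$0\ldots0$'' denotes a string of zeros completing the word to length $k$. (R1) $x_1\ldots x_{k-1}x_k\sim x_1\ldots x_{k-1}y_k$ whenever $y_k\neq x_k$. (R2) For $0\le i\le k-2$: $x_1\ldots x_i0\ldots0\sim x_1\ldots x_ix_{i+1}\ldots x_k$ whenever $x_j\neq 0$ for all $i+1\le j\le k$. (R3) For $1\le i\le k-1$: $x_1\ldots x_{i-1}x_i0\ldots0\sim x_1\ldots x_{i-1}y_i0\ldots0$ whenever $x_i,y_i\neq0$ and $x_i\ne y_i$. In particular, $H_{n,1}$ is the complete graph $K_n$. $E_{n,k}$ denotes the edge set of $H_{n,k}$. *)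

From mathcomp Require Import all_boot all_order all_algebra.
Set Implicit Arguments. Unset Strict Implicit. Unset Printing Implicit Defensive.

(* Vertices of H_{n,k}: words x_1 ... x_k over Z_n = {0,...,n-1}, encoded as
   k-tuples of ordinals 'I_n; the letter x_j (1-indexed) is
   [letter x (j-1)] (0-indexed position). *)
Definition vtx (n k : nat) := (k.-tuple 'I_n).

Definition letter n k (x : vtx n k) (p : nat) : nat := nth 0 (map val x) p.

Definition agree_below n k (x y : vtx n k) (m : nat) : bool :=
  [forall p : 'I_k, (p < m) ==> (letter x p == letter y p)].

Definition zero_from n k (x : vtx n k) (m : nat) : bool :=
  [forall p : 'I_k, (m <= p) ==> (letter x p == 0)].

Definition nonzero_from n k (x : vtx n k) (m : nat) : bool :=
  [forall p : 'I_k, (m <= p) ==> (letter x p != 0)].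

(* (R1): x_1..x_{k-1} x_k ~ x_1..x_{k-1} y_k with y_k <> x_k *)
Definition R1 n k (x y : vtx n k) : bool :=
  agree_below x y k.-1 && (letter x k.-1 != letter y k.-1).

(* (R2): for 0 <= i <= k-2 : x_1..x_i 0..0 ~ x_1..x_i x_{i+1}..x_k
   with x_j <> 0 for i+1 <= j <= k (1-indexed), i.e. 0-indexed positions >= i. *)
Definition R2 n k (x y : vtx n k) : bool :=
  [exists i : 'I_k, (i <= k - 2) &&
     [&& agree_below x y i, zero_from x i & nonzero_from y i]].

(* (R3): for 1 <= i <= k-1 : x_1..x_{i-1} x_i 0..0 ~ x_1..x_{i-1} y_i 0..0
   with x_i, y_i <> 0 and x_i <> y_i. Letter x_i is at 0-indexed position i-1. *)
Definition R3 n k (x y : vtx n k) : bool :=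
  [exists i : 'I_k, (1 <= i) &&
     [&& agree_below x y i.-1, zero_from x i, zero_from y i,
         letter x i.-1 != 0, letter y i.-1 != 0 &
         letter x i.-1 != letter y i.-1]].

Definition Hadj n k (x y : vtx n k) : bool :=
  (x != y) && [|| R1 x y, R1 y x, R2 x y, R2 y x, R3 x y | R3 y x].

Definition Hedges n k : {set {set vtx n k}} :=
  [set e : {set vtx n k} | [exists x, exists y, Hadj x y && (e == [set x; y])]].

From mathcomp Require Import all_boot all_order all_algebra.
From mathcomp Require Import zify ring.
Import GRing.Theory Num.Theory.

Set Implicit Arguments.
Unset Strict Implicit.
Unset Printing Implicit Defensive.

(* Count ordered adjacent pairs, which is twice the number of edges, by the
   first letters [a], [b] of the two words.  If [a = b] the words are adjacent
   iff their tails are adjacent in H_{n,k-1}.  If [a <> b] only R2 and R3 with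
   i = 0, resp. i = 1, can apply: [0 0..0 ~ b y] with [b, y] nonzero gives
   2(n-1)^k pairs and [a 0..0 ~ b 0..0] with [a, b] distinct nonzero gives
   (n-1)(n-2).  Hence A(n,k+1) = n A(n,k) + 2(n-1)^(k+1) + (n-1)(n-2), and
   the closed form follows by induction. *)

Section UndirectedEdges.

Variables (T : finType) (R : rel T).
Hypotheses (R_sym : symmetric R) (R_irr : irreflexive R).

Definition undirected_edges : {set {set T}} :=
  [set e : {set T} | [exists x, exists y, R x y && (e == [set x; y])]].

Let rank_lt (p : T * T) := (enum_rank p.1 < enum_rank p.2)%N.

Let oriented_edges := [set p : T * T | R p.1 p.2 && rank_lt p].

Lemma rank_lt_sym x y : x != y -> rank_lt (y, x) = ~~ rank_lt (x, y).
Proof.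
move=> neq_xy; rewrite /rank_lt /=.
case: (ltngtP (enum_rank x) (enum_rank y)) => // /ord_inj /enum_rank_inj eq_xy.
by rewrite eq_xy eqxx in neq_xy.
Qed.

Lemma R_neq x y : R x y -> x != y.
Proof. by apply: contraTneq => ->; rewrite R_irr. Qed.

Lemma undirected_edgesE :
  undirected_edges = (fun p : T * T => [set p.1; p.2]) @: oriented_edges.
Proof.
apply/setP => e; rewrite inE; apply/existsP/imsetP => [[x]|[[x y]]].
  case/existsP=> y /andP[Rxy /eqP ->].
  case lt_xy: (rank_lt (x, y)); first by exists (x, y); rewrite // inE Rxy lt_xy.
  exists (y, x); last by rewrite /= setUC.
  by rewrite inE /= R_sym Rxy (rank_lt_sym (R_neq Rxy)) lt_xy.
rewrite inE /= => /andP[Rxy _] ->.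
by exists x; apply/existsP; exists y; rewrite Rxy eqxx.
Qed.

Lemma pair_set_inj :
  {in oriented_edges &, injective (fun p : T * T => [set p.1; p.2])}.
Proof.
move=> [x y] [x' y']; rewrite !inE /rank_lt /= => /andP[_] + /andP[_] + E.
have yE : y \in [set x'; y'] by rewrite -E set22.
have: x \in [set x'; y'] by rewrite -E set21.
case/set2P=> ->; case/set2P: yE => -> //; rewrite ?ltnn //.
by move=> lt_yx /(ltn_trans lt_yx); rewrite ltnn.
Qed.

Lemma card_undirected_edges :
  (2 * #|undirected_edges| = \sum_x \sum_y R x y)%N.
Proof.
rewrite undirected_edgesE card_in_imset; last exact: pair_set_inj.
have split_pair (p : T * T) :
    (R p.1 p.2 : nat) = (R p.1 p.2 && rank_lt p) + (R p.2 p.1 && rank_lt (p.2, p.1)).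
  case: p => x y /=; rewrite [R y x]R_sym; case Rxy: (R x y) => //=.
  by rewrite (rank_lt_sym (R_neq Rxy)); case: (rank_lt _).
rewrite pair_big /= (eq_bigr _ (fun p _ => split_pair p)) big_split /=.
rewrite [X in _ + X](reindex_inj (h := fun p : T * T => (p.2, p.1))) /=; last first.
  by move=> [a b] [c d] /= [-> ->].
rewrite addnn -mul2n -sum1_card big_mkcond /=.
by congr (2 * _); apply: eq_bigr => p _; rewrite inE; case: (_ && _).
Qed.

End UndirectedEdges.

Lemma Hadj_sym n k : symmetric (@Hadj n k).
Proof.
move=> x y; rewrite /Hadj eq_sym.
by case: (R1 x y) (R1 y x) (R2 x y) (R2 y x) (R3 x y) (R3 y x) => [] [] [] [] [] [];
  rewrite ?andbT ?andbF.
Qed.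

Lemma Hadj_irr n k : irreflexive (@Hadj n k).
Proof. by move=> x; rewrite /Hadj eqxx. Qed.

(* The rules restated on the underlying words in [seq nat], where a word of
   length k+1 splits as a letter and a word of length k. *)

Definition all_zero (s : seq nat) := all (fun v => v == 0) s.
Definition all_nonzero (s : seq nat) := all (fun v => v != 0) s.

Definition rule1 k (s t : seq nat) :=
  (take k.-1 s == take k.-1 t) && (nth 0 s k.-1 != nth 0 t k.-1).

Definition rule2 k (s t : seq nat) :=
  has (fun i => (i <= k - 2) &&
    [&& take i s == take i t, all_zero (drop i s) & all_nonzero (drop i t)])
  (iota 0 k).

Definition rule3 k (s t : seq nat) :=
  has (fun i => (1 <= i) &&
    [&& take i.-1 s == take i.-1 t, all_zero (drop i s), all_zero (drop i t),
        nth 0 s i.-1 != 0, nth 0 t i.-1 != 0 & nth 0 s i.-1 != nth 0 t i.-1])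
  (iota 0 k).

Definition adj k (s t : seq nat) :=
  (s != t) && [|| rule1 k s t, rule1 k t s, rule2 k s t, rule2 k t s,
                  rule3 k s t | rule3 k t s].

Lemma agree_belowE n k (x y : vtx n k) m :
  agree_below x y m = (take m (map val x) == take m (map val y)).
Proof.
apply/forallP/eqP => [agree|eq_take p].
  apply: (@eq_from_nth _ 0) => [|i]; first by rewrite !size_take !size_map !size_tuple.
  rewrite size_take size_map size_tuple leq_min => /andP[lt_im lt_ik].
  by rewrite !nth_take //; have /implyP/(_ lt_im)/eqP := agree (Ordinal lt_ik).
apply/implyP => lt_pm; have := congr1 (nth 0 ^~ p) eq_take.
by rewrite /letter !nth_take // => ->.
Qed.

Lemma forall_fromE n k (x : vtx n k) m (P : pred nat) :
  [forall p : 'I_k, (m <= p) ==> P (letter x p)] = all P (drop m (map val x)).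
Proof.
apply/forallP/(all_nthP 0) => [Px i|Px p].
  rewrite size_drop size_map size_tuple nth_drop => lt_i.
  have lt_mi : m + i < k by lia.
  by have /implyP := Px (Ordinal lt_mi); apply; rewrite /= leq_addr.
apply/implyP => le_mp.
have lt_pm : p - m < size (drop m (map val x)).
  by rewrite size_drop size_map size_tuple; have := ltn_ord p; lia.
by have := Px _ lt_pm; rewrite nth_drop subnKC.
Qed.

Lemma zero_fromE n k (x : vtx n k) m : zero_from x m = all_zero (drop m (map val x)).
Proof. exact: (forall_fromE x m (fun v => v == 0)). Qed.

Lemma nonzero_fromE n k (x : vtx n k) m :
  nonzero_from x m = all_nonzero (drop m (map val x)).
Proof. exact: (forall_fromE x m (fun v => v != 0)). Qed.

Lemma exists_ordE k (Q : pred nat) : [exists i : 'I_k, Q i] = has Q (iota 0 k).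
Proof.
apply/existsP/hasP => [[i Qi]|[i]]; first by exists (val i); rewrite // mem_iota /= ltn_ord.
by rewrite mem_iota => lt_ik Qi; exists (Ordinal lt_ik).
Qed.

Lemma HadjE n k (x y : vtx n k) : Hadj x y = adj k (map val x) (map val y).
Proof.
rewrite /Hadj /adj /R1 /R2 /R3 /rule1 /rule2 /rule3 -!exists_ordE !agree_belowE.
rewrite (inj_eq (inj_map val_inj)); congr (_ && [|| _, _, _, _, _ | _]);
  by apply: eq_existsb => i; rewrite agree_belowE !zero_fromE ?nonzero_fromE.
Qed.

Lemma has_iotaS (P : pred nat) k :
  has P (iota 0 k.+1) = P 0 || has (fun i => P i.+1) (iota 0 k).
Proof. by rewrite /= -[1]addn0 iotaDl has_map. Qed.

Lemma rule1_cons k a b s t :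
  rule1 k.+2 (a :: s) (b :: t) = (a == b) && rule1 k.+1 s t.
Proof. by rewrite /rule1 /= eqseq_cons andbA. Qed.

Lemma rule2_cons2 a b s t :
  rule2 2 (a :: s) (b :: t) = [&& a == 0, all_zero s, b != 0 & all_nonzero t].
Proof. by rewrite /rule2 /= orbF !andbA. Qed.

(* Not valid for words of length 2: the junk value [1 - 2 = 0] lets [rule2 1]
   use i = 0, which has no counterpart in [rule2 2]. *)
Lemma rule2_cons k a b s t :
  rule2 k.+3 (a :: s) (b :: t) =
  [&& a == 0, all_zero s, b != 0 & all_nonzero t] || (a == b) && rule2 k.+2 s t.
Proof.
rewrite /rule2 has_iotaS; congr (_ || _); first by rewrite take0 !drop0 /= !andbA.
case: (a =P b) => [<-|/eqP neq_ab]; rewrite ?eqxx ?(negbTE neq_ab) ?andFb.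
  by apply: eq_has => i; rewrite /= eqseq_cons eqxx !subn2.
by apply/hasPn => i _; rewrite /= eqseq_cons (negbTE neq_ab) andbF.
Qed.

Lemma rule3_cons k a b s t :
  rule3 k.+2 (a :: s) (b :: t) =
  [&& a != 0, b != 0, a != b, all_zero s & all_zero t] || (a == b) && rule3 k.+1 s t.
Proof.
rewrite /rule3 !has_iotaS ltnn !andFb !orFb; congr (_ || _).
  by rewrite /= !drop0; case: (all_zero s); case: (all_zero t); rewrite /= ?andbT ?andbF.
case: (a =P b) => [<-|/eqP neq_ab]; rewrite ?eqxx ?(negbTE neq_ab) ?andFb.
  by apply: eq_has => i; rewrite /= eqseq_cons eqxx.
by apply/hasPn => i _; rewrite /= eqseq_cons (negbTE neq_ab).
Qed.

Lemma adj_cons k a b s t : size s = k -> size t = k ->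
  adj k.+1 (a :: s) (b :: t) =
  if a == b then adj k s t else
  [|| [&& a == 0, b != 0, all_zero s & all_nonzero t],
      [&& b == 0, a != 0, all_zero t & all_nonzero s] |
      [&& a != 0, b != 0, all_zero s & all_zero t]].
Proof.
case: k => [|[|k]] size_s size_t.
- move/size0nil: size_s => ->; move/size0nil: size_t => ->.
  rewrite /adj /rule1 /rule2 /rule3 /= eqseq_cons andbT [b == a]eq_sym.
  case: (a =P b) => //= neq_ab; case: (a =P 0) => a0; case: (b =P 0) => b0 //=.
  by case: neq_ab; rewrite a0 b0.
- case: s size_s => [|c []] // _; case: t size_t => [|d []] // _.
  rewrite /adj !rule1_cons !rule2_cons2 !rule3_cons !eqseq_cons.
  rewrite /rule1 /rule2 /rule3 /all_zero /all_nonzero /= !andbT [b == a]eq_sym [d == c]eq_sym.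
  by case: (a =P b); case: (c =P d); case: (a =P 0); case: (b =P 0);
     case: (c =P 0); case: (d =P 0) => //=; congruence.
rewrite /adj !rule1_cons !rule2_cons !rule3_cons !eqseq_cons [b == a]eq_sym.
case: (a =P b) => [<-|_] /=; first by case: (a == 0); rewrite /= ?andbF.
by case: (a == 0); case: (b == 0); case: (all_zero s); case: (all_zero t);
   case: (all_nonzero s); case: (all_nonzero t).
Qed.

Lemma sum_tuple_cons n k (F : seq nat -> nat) :
  \sum_(x : k.+1.-tuple 'I_n) F (map val x) =
  \sum_(a < n) \sum_(u : k.-tuple 'I_n) F (val a :: map val u).
Proof.
rewrite pair_big /= (reindex (fun p : 'I_n * k.-tuple 'I_n => [tuple of p.1 :: p.2])) //=.
exists (fun x : k.+1.-tuple 'I_n => (thead x, [tuple of behead x])) => [[a u]|x] _ /=.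
  by congr (_, _); apply: val_inj.
by rewrite [RHS]tuple_eta; apply: val_inj.
Qed.

Lemma sum_all_tuple n k (P : pred nat) :
  \sum_(u : k.-tuple 'I_n) (all P (map val u) : nat) = (\sum_(a < n) (P a : nat)) ^ k.
Proof.
elim: k => [|k IHk].
  by rewrite (eq_bigr (fun => 1)) => [|u _]; rewrite ?tuple0 // sum1_card card_tuple.
rewrite (sum_tuple_cons _ _ (fun s => nat_of_bool (all P s))) expnS -IHk big_distrlr.
by apply: eq_bigr => a _; apply: eq_bigr => u _; rewrite /= -mulnb.
Qed.

Lemma sum_ord_eq0 m : \sum_(a < m.+1) (val a == 0 : nat) = 1.
Proof. by rewrite big_ord_recl big1. Qed.

Lemma sum_ord_neq0 m : \sum_(a < m.+1) (val a != 0 : nat) = m.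
Proof. by rewrite big_ord_recl (eq_bigr (fun => 1)) // sum1_card card_ord. Qed.

Lemma count_all_zero m k : \sum_(u : k.-tuple 'I_m.+1) (all_zero (map val u) : nat) = 1.
Proof. by rewrite sum_all_tuple sum_ord_eq0 exp1n. Qed.

Lemma count_all_nonzero m k :
  \sum_(u : k.-tuple 'I_m.+1) (all_nonzero (map val u) : nat) = m ^ k.
Proof. by rewrite sum_all_tuple sum_ord_neq0. Qed.

Definition adj_pairs n k :=
  \sum_(x : vtx n k) \sum_(y : vtx n k) (adj k (map val x) (map val y) : nat).

Lemma card_Hedges n k : 2 * #|Hedges n k| = adj_pairs n k.
Proof.
rewrite (card_undirected_edges (@Hadj_sym n k) (@Hadj_irr n k)).
by apply: eq_bigr => x _; apply: eq_bigr => y _; rewrite HadjE.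
Qed.

Lemma adj_pairs0 n : adj_pairs n 0 = 0.
Proof. by apply: big1 => x _; apply: big1 => y _; rewrite (tuple0 x) (tuple0 y) /adj eqxx. Qed.

Definition first_letter_pairs (m k a b : nat) :=
  if a == b then adj_pairs m.+1 k else if (a == 0) || (b == 0) then m ^ k else 1.

Lemma adj_pairs_first_letters m k (a b : nat) :
  \sum_(u : k.-tuple 'I_m.+1) \sum_(v : k.-tuple 'I_m.+1)
    (adj k.+1 (a :: map val u) (b :: map val v) : nat)
  = first_letter_pairs m k a b.
Proof.
under eq_bigr do under eq_bigr do rewrite adj_cons ?size_map ?size_tuple //.
rewrite /first_letter_pairs; case: eqP => // /eqP neq_ab.
have sum_prod (P Q : pred (seq nat)) :
    \sum_(u : k.-tuple 'I_m.+1) \sum_(v : k.-tuple 'I_m.+1)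
      (P (map val u) && Q (map val v) : nat)
    = (\sum_(u : k.-tuple 'I_m.+1) (P (map val u) : nat))
      * \sum_(v : k.-tuple 'I_m.+1) (Q (map val v) : nat).
  by rewrite big_distrlr; apply: eq_bigr => u _; apply: eq_bigr => v _; exact/esym/mulnb.
case: (a =P 0) => [a0|/eqP a_nz]; case: (b =P 0) => [b0|/eqP b_nz] /=.
- by rewrite a0 b0 in neq_ab.
- under eq_bigr do under eq_bigr do rewrite orbF.
  by rewrite sum_prod count_all_zero count_all_nonzero mul1n.
- under eq_bigr do under eq_bigr do rewrite orbF.
  by rewrite exchange_big sum_prod count_all_zero count_all_nonzero mul1n.
- by rewrite sum_prod !count_all_zero.
Qed.

Lemma sum_first_letter_pairs0 m k :
  \sum_(b < m.+1) first_letter_pairs m k 0 (val b) = adj_pairs m.+1 k + m * m ^ k.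
Proof.
rewrite big_ord_recl /first_letter_pairs /= (eq_bigr (fun => m ^ k)) //.
by rewrite sum_nat_const card_ord.
Qed.

Lemma sum_first_letter_pairsS m k (i : 'I_m) :
  \sum_(b < m.+1) first_letter_pairs m k i.+1 (val b) = m ^ k + adj_pairs m.+1 k + (m - 1).
Proof.
rewrite big_ord_recl /first_letter_pairs /= -addnA; congr (_ + _).
rewrite (eq_bigr (fun j : 'I_m => if j == i then adj_pairs m.+1 k else 1)) => [|j _].
  rewrite (bigD1 i) //= eqxx; congr (_ + _).
  rewrite (eq_bigr (fun => 1)) => [|j /negbTE ->] //.
  by rewrite sum1_card cardC1 card_ord subn1.
by rewrite /= eqSS eq_sym.
Qed.

Lemma adj_pairsS m k :
  adj_pairs m.+1 k.+1 = m.+1 * adj_pairs m.+1 k + 2 * m * m ^ k + m * (m - 1).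
Proof.
rewrite {1}/adj_pairs /vtx.
rewrite (sum_tuple_cons _ _ (fun s => \sum_(y : vtx m.+1 k.+1) adj k.+1 s (map val y))).
under eq_bigr do under eq_bigr do
  rewrite (sum_tuple_cons _ _ (fun t => nat_of_bool (adj k.+1 _ t))).
under eq_bigr do rewrite exchange_big.
under eq_bigr do under eq_bigr do rewrite adj_pairs_first_letters.
rewrite big_ord_recl sum_first_letter_pairs0.
under eq_bigr do rewrite sum_first_letter_pairsS.
rewrite sum_nat_const card_ord.
nia.
Qed.

Local Open Scope ring_scope.

Definition edge_count_formula (n k : nat) : rat :=
  3%:R / 2%:R * n%:R ^+ k.+1 - (n%:R - 1) ^+ k.+1 - 2%:R * n%:R ^+ k - n%:R / 2%:R + 1.

Lemma adj_pairs_formula m k :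
  (adj_pairs m.+1 k)%:R = 2%:R * edge_count_formula m.+1 k.
Proof.
have natr_pred : ((m * (m - 1))%N%:R : rat) = m%:R * (m%:R - 1).
  by case: m => [|m]; rewrite ?mul0r // natrM subn1 /= mulrSr addrK.
elim: k => [|k IHk]; first by rewrite adj_pairs0 /edge_count_formula; field.
rewrite adj_pairsS !natrD natr_pred !natrM IHk natrX /edge_count_formula !exprS.
rewrite -!natr1 addrK; set x := (m%:R : rat); set y := (x + 1) ^+ k; set z := x ^+ k.
by field.
Qed.

(* The formula also holds for [k = 0]. *)
Theorem mainTheorem1 (n k : nat) (hn : (2 <= n)%N) (hk : (1 <= k)%N) :
  (#|Hedges n k|%:R : rat) =
    3%:R / 2%:R * (n%:R) ^+ k.+1 - (n%:R - 1) ^+ k.+1 - 2%:R * (n%:R) ^+ k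
    - n%:R / 2%:R + 1.
Proof.
case: n hn => [//|m] _.
apply: (@mulfI _ (2%:R : rat)) => //.
by rewrite -natrM card_Hedges adj_pairs_formula.
Qed.
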